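(* Let $D\subset\mathbb{R}^d$ be measurable, $k$ a measurable positive definite kernel on $D$ with all integrals below finite, and $r:D\to[0,\infty)$. Let $\bar{\mathbf{x}}_1,\dots,\bar{\mathbf{x}}_n\in D$ be distinct with replicate counts $a_1,\dots,a_n\ge1$, $N=\sum_ia_i$, with $r(\bar{\mathbf{x}}_i)>0$ for all $i$. Let $\mathbf{K}_n$ be the matrix with entries $k(\bar{\mathbf{x}}_i,\bar{\mathbf{x}}_j)+\delta_{ij}r(\bar{\mathbf{x}}_i)/a_i$ (invertible), $\mathbf{k}(\mathbf{x})=(k(\mathbf{x},\bar{\mathbf{x}}_i))_{i=1}^n$, $w(\mathbf{y},\mathbf{z})=\int_Dk(\mathbf{y},\mathbf{x})k(\mathbf{z},\mathbf{x})\,d\mathbf{x}$, $\mathbf{W}_n=(w(\bar{\mathbf{x}}_i,\bar{\mathbf{x}}_j))_{i,j}$, $\mathbf{w}(\tilde{\mathbf{x}})=(w(\tilde{\mathbf{x}},\bar{\mathbf{x}}_i))_{i=1}^n$, $E=\int_Dk(\mathbf{x},\mathbf{x})\,d\mathbf{x}$, $\check{\sigma}_n^2(\mathbf{x})=k(\mathbf{x},\mathbf{x})-\mathbf{k}(\mathbf{x})^\top\mathbf{K}_n^{-1}\mathbf{k}(\mathbf{x})$, $\sigma_n^2(\mathbf{x})=\check{\sigma}_n^2(\mathbf{x})+r(\mathbf{x})$, and assume $\sigma_n^2(\tilde{\mathbf{x}})>0$ for all $\tilde{\mathbf{x}}\in D$. Define: - for $k\in\{1,\dots,n\}$, $I_{N+1}(\bar{\mathbf{x}}_k)=E-\mathrm{tr}(\mathbf{K}'^{-1}\mathbf{W}_n)$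 where $\mathbf{K}'$ is $\mathbf{K}_n$ with $a_k$ replaced by $a_k+1$ (adding a replicate at $\bar{\mathbf{x}}_k$); - for $\tilde{\mathbf{x}}\in D$, $I_{N+1}(\tilde{\mathbf{x}})=E-\mathrm{tr}(\mathbf{K}_{n+1}^{-1}\mathbf{W}_{n+1})$ where $\mathbf{K}_{n+1}=\begin{bmatrix}\mathbf{K}_n&\mathbf{k}(\tilde{\mathbf{x}})\\\mathbf{k}(\tilde{\mathbf{x}})^\top&k(\tilde{\mathbf{x}},\tilde{\mathbf{x}})+r(\tilde{\mathbf{x}})\end{bmatrix}$ and $\mathbf{W}_{n+1}=\begin{bmatrix}\mathbf{W}_n&\mathbf{w}(\tilde{\mathbf{x}})\\\mathbf{w}(\tilde{\mathbf{x}})^\top&w(\tilde{\mathbf{x}},\tilde{\mathbf{x}})\end{bmatrix}$ (adding $\tilde{\mathbf{x}}$ as a new design site with a single observation). Let $k^*\in\arg\min_{1\le k\le n}I_{N+1}(\bar{\mathbf{x}}_k)$ and $$\mathbf{B}_{k^*}=\frac{(\mathbf{K}_n^{-1})_{\cdot,k^*}(\mathbf{K}_n^{-1})_{k^*,\cdot}}{a_{k^*}(a_{k^*}+1)/r(\bar{\mathbf{x}}_{k^*})-(\mathbf{K}_n^{-1})_{k^*,k^*}},$$ and suppose $\mathrm{tr}(\mathbf{B}_{k^*}\mathbf{W}_n)>0$ (and the denominator of $\mathbf{B}_{k^*}$ is nonzero). If $$r(\tilde{\mathbf{x}})\ \ge\ \frac{\mathbf{k}(\tilde{\mathbf{x}})^\top\mathbf{K}_n^{-1}\mathbf{W}_n\mathbf{K}_n^{-1}\mathbf{k}(\tilde{\mathbf{x}})-2\mathbf{w}(\tilde{\mathbf{x}})^\top\mathbf{K}_n^{-1}\mathbf{k}(\tilde{\mathbf{x}})+w(\tilde{\mathbf{x}},\tilde{\mathbf{x}})}{\mathrm{tr}(\mathbf{B}_{k^*}\mathbf{W}_n)}-\check{\sigma}_n^2(\tilde{\mathbf{x}})\qquad\text{for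 all }\tilde{\mathbf{x}}\in D,$$ then replicating is optimal, i.e. $I_{N+1}(\bar{\mathbf{x}}_{k^*})\le I_{N+1}(\tilde{\mathbf{x}})$ for all $\tilde{\mathbf{x}}\in D$.
   Context: Setting: sequential design for Gaussian process regression with zero-mean GP prior with kernel $k$, independent Gaussian noise of variance $r(\mathbf{x})$, and $a_i$ replicates at unique site $\bar{\mathbf{x}}_i$. The criterion is the integrated mean-squared prediction error (integral over $D$ of the de-noised posterior variance $\check{\sigma}^2$) of the design after one more observation, either a replicate at an existing site or a new site. $\delta_{ij}$ is the Kronecker delta; $(\cdot)_{\cdot,k}$ and $(\cdot)_{k,\cdot}$ denote the $k$-th column and row. *)

From HB Require Import structures.
From mathcomp Require Import all_boot all_order all_algebra.
From mathcomp Require Import all_classical all_reals all_analysis.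
Set Implicit Arguments. Unset Strict Implicit. Unset Printing Implicit Defensive.
Import Order.TTheory GRing.Theory Num.Theory.
Local Open Scope ring_scope.
Local Open Scope classical_set_scope.

Section GPDefs.
Variables (R : realType) (dsp : measure_display) (T : measurableType dsp).
Variable (mu : {measure set T -> \bar R}).

Definition pd_kernel (D : set T) (k : T -> T -> R) : Prop :=
  (forall x y, D x -> D y -> k x y = k y x) /\
  (forall (m : nat) (x : 'I_m -> T) (c : 'I_m -> R), (forall i, D (x i)) ->
     0 <= \sum_(i < m) \sum_(j < m) c i * c j * k (x i) (x j)).

Variables (D : set T) (k : T -> T -> R) (r : T -> R).

Definition wfun (y z : T) : R := Rintegral mu D (fun x => k y x * k z x).
Definition Efun : R := Rintegral mu D (fun x => k x x).

Variables (n : nat) (xbar : 'I_n -> T).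

Definition Kmat (a : 'I_n -> nat) : 'M[R]_n :=
  \matrix_(i, j) (k (xbar i) (xbar j) + (i == j)%:R * (r (xbar i) / (a i)%:R)).
Definition kvec (x : T) : 'cV[R]_n := \col_i k x (xbar i).
Definition Wmat : 'M[R]_n := \matrix_(i, j) wfun (xbar i) (xbar j).
Definition wvec (x : T) : 'cV[R]_n := \col_i wfun x (xbar i).

Definition sigcheck2 (a : 'I_n -> nat) (x : T) : R :=
  k x x - ((kvec x)^T *m invmx (Kmat a) *m kvec x) 0 0.
Definition sigma2 (a : 'I_n -> nat) (x : T) : R := sigcheck2 a x + r x.

Definition I_rep (a : 'I_n -> nat) (l : 'I_n) : R :=
  Efun - \tr (invmx (Kmat (fun i => (a i + (i == l))%N)) *m Wmat).

Definition Kext (a : 'I_n -> nat) (x : T) : 'M[R]_(n + 1) :=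
  block_mx (Kmat a) (kvec x) (kvec x)^T (k x x + r x)%:M.
Definition Wext (x : T) : 'M[R]_(n + 1) :=
  block_mx Wmat (wvec x) (wvec x)^T (wfun x x)%:M.

Definition I_new (a : 'I_n -> nat) (x : T) : R :=
  Efun - \tr (invmx (Kext a x) *m Wext x).

Definition Bdenom (a : 'I_n -> nat) (l : 'I_n) : R :=
  (a l)%:R * (a l + 1)%:R / r (xbar l) - invmx (Kmat a) l l.
Definition Bmat (a : 'I_n -> nat) (l : 'I_n) : 'M[R]_n :=
  (Bdenom a l)^-1 *: (col l (invmx (Kmat a)) *m row l (invmx (Kmat a))).

Definition rhs_bound (a : 'I_n -> nat) (l : 'I_n) (x : T) : R :=
  (((kvec x)^T *m invmx (Kmat a) *m Wmat *m invmx (Kmat a) *m kvec x) 0 0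
   - 2 * ((wvec x)^T *m invmx (Kmat a) *m kvec x) 0 0 + wfun x x)
  / \tr (Bmat a l *m Wmat) - sigcheck2 a x.

End GPDefs.

From HB Require Import structures.
From mathcomp Require Import all_boot all_order all_algebra.
From mathcomp Require Import all_classical all_reals all_analysis.
From mathcomp Require Import ring.
Set Implicit Arguments. Unset Strict Implicit. Unset Printing Implicit Defensive.

(* Adding a replicate
   at xbar_l lowers the noise entry (l, l) by d = r(xbar_l) / (a_l (a_l + 1)),
   so by Sherman-Morrison the new inverse is K_n^-1 + B_l and the IMSPE drops
   by tr(B_l W_n).  Adding a new site borders K_n, whose Schur complement is
   sigma_n^2(x); the block inverse shows the IMSPE then drops by
   Q(x) / sigma_n^2(x), Q(x) being the numerator in the bound.  The hypothesis
   on r says precisely sigma_n^2(x) >= Q(x) / tr(B_l W_n). *)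

Import Order.TTheory GRing.Theory Num.Theory.
Local Open Scope ring_scope.
Local Open Scope classical_set_scope.

Lemma mulmx1_invmx (F : fieldType) (m : nat) (A B : 'M[F]_m) :
  A *m B = 1%:M -> invmx A = B.
Proof.
move=> AB; have [Au _] := mulmx1_unit AB.
by rewrite -[invmx A]mulmx1 -AB mulmxA mulVmx // mul1mx.
Qed.

Definition schur_border (F : fieldType) (n : nat) (A : 'M[F]_n) (b : 'cV_n)
  (c : 'rV_n) (d : F) : F := d - (c *m invmx A *m b) 0 0.

Lemma invmx_border (F : fieldType) (n : nat) (A : 'M[F]_n) (b : 'cV_n)
    (c : 'rV_n) (d : F) (t := (schur_border A b c d)^-1) :
  A \in unitmx -> schur_border A b c d != 0 ->
  invmx (block_mx A b c d%:M) =
    block_mx (invmx A + t *: (invmx A *m b *m (c *m invmx A)))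
             (- t *: (invmx A *m b)) (- t *: (c *m invmx A)) t%:M.
Proof.
rewrite /t /schur_border => Au; set Ai := invmx A; set q := _ 0 0 => s0.
have ts : (d - q)^-1 * (d - q) = 1 by rewrite mulVf.
have qE : c *m Ai *m b = q%:M by rewrite {1}[c *m Ai *m b]mx11_scalar.
have AAi : A *m Ai = 1%:M by rewrite mulmxV.
apply: mulmx1_invmx; rewrite mulmx_block scalar_mx_block; congr block_mx.
- by rewrite mulmxDr AAi -!scalemxAr !mulmxA AAi mul1mx scaleNr addrK.
- by rewrite -scalemxAr mulmxA AAi mul1mx mul_mx_scalar addrC scaleNr subrr.
- rewrite mulmxDr -!scalemxAr !mulmxA qE !mul_scalar_mx -!scalemxAl !scalerA.
  rewrite -[X in X + _ + _]scale1r -!scalerDl.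
  by rewrite [X in X *: _](_ : _ = 0) ?scale0r // -ts; ring.
- rewrite -scalemxAr mulmxA qE mul_mx_scalar !scale_scalar_mx -raddfD /=.
  by congr (_%:M); rewrite -ts; ring.
Qed.

Lemma mxtrace_invmx_border_mul (F : fieldType) (n : nat) (A W : 'M[F]_n)
    (b w : 'cV_n) (d e : F) :
  A \in unitmx -> (invmx A)^T = invmx A -> schur_border A b b^T d != 0 ->
  \tr (invmx (block_mx A b b^T d%:M) *m block_mx W w w^T e%:M) =
  \tr (invmx A *m W) + ((b^T *m invmx A *m W *m invmx A *m b) 0 0
     - 2 * (w^T *m invmx A *m b) 0 0 + e) / schur_border A b b^T d.
Proof.
move=> Au AiT s0; rewrite invmx_border //; set t := _^-1; set Ai := invmx A.
have trbW : \tr (Ai *m b *m (b^T *m Ai) *m W) = (b^T *m Ai *m W *m Ai *m b) 0 0.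
  by rewrite -trace_mx11 -mulmxA mxtrace_mulC !mulmxA.
have trbw : \tr (Ai *m b *m w^T) = (w^T *m Ai *m b) 0 0.
  by rewrite -trace_mx11 mxtrace_mulC mulmxA.
have bw : (b^T *m Ai *m w) 0 0 = (w^T *m Ai *m b) 0 0.
  have -> : w^T *m Ai *m b = (b^T *m Ai *m w)^T.
    by rewrite !trmx_mul trmxK AiT mulmxA.
  by rewrite [RHS]mxE.
rewrite mulmx_block mxtrace_block !mxtraceD mulmxDl mxtraceD -!scalemxAl.
rewrite !trace_mx11 !mxtraceZ trbW trbw.
rewrite -bw [X in _ + (X + _)]mxE -scalar_mxM [(_%:M) 0 0]mxE eqxx mulr1n; ring.
Qed.

Lemma invmx_subr_rank1 (F : fieldType) (n : nat) (K : 'M[F]_n) (u : 'cV_n)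
    (v : 'rV_n) (d : F) :
  K \in unitmx -> d != 0 -> d^-1 - (v *m invmx K *m u) 0 0 != 0 ->
  invmx (K - d *: (u *m v)) = invmx K +
    (d^-1 - (v *m invmx K *m u) 0 0)^-1 *: (invmx K *m u *m (v *m invmx K)).
Proof.
move=> Ku d0; set Ki := invmx K; set q := _ 0 0 => s0; set g := (d^-1 - q)^-1.
have qE : v *m Ki *m u = q%:M by rewrite {1}[v *m Ki *m u]mx11_scalar.
have KKi : K *m Ki = 1%:M by rewrite mulmxV.
(* (K - d u v) (Ki + g Ki u v Ki) = 1 + (g - d - d g q) u v Ki, and
   g (1 - d q) = d. *)
apply: mulmx1_invmx.
set P := u *m (v *m Ki).
have PP : u *m (v *m (Ki *m P)) = q *: P.
  rewrite {1}/P [Ki *m _]mulmxA [v *m _]mulmxA.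
  by rewrite [v *m (Ki *m u)]mulmxA qE mul_scalar_mx -scalemxAr.
rewrite mulmxBl mulmxDr -!scalemxAr -!scalemxAl !mulmxA KKi mul1mx -!mulmxA.
rewrite -/P mulmxDr -scalemxAr mulmxDr -scalemxAr PP !scalerA.
rewrite -/P -[P in d *: (P + _)]scale1r -scalerDl scalerA -addrA -scalerBl.
rewrite [X in X *: P](_ : _ = 0) ?scale0r ?addr0 //.
rewrite /g -(mulVf s0) -mulrDr subrK.
by rewrite mulrCA mulfV // mulr1 subrr.
Qed.

Section ReplicateOrNewSite.
Variables (R : realType) (dsp : measure_display) (T : measurableType dsp).
Variables (mu : {measure set T -> \bar R}) (D : set T) (k : T -> T -> R).
Variables (r : T -> R) (n : nat) (xbar : 'I_n -> T).

Local Notation Kmat := (Kmat k r xbar).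
Local Notation Wmat := (Wmat mu D k xbar).

Definition rhs_bound_num (a : 'I_n -> nat) (x : T) : R :=
  ((kvec k xbar x)^T *m invmx (Kmat a) *m Wmat *m invmx (Kmat a) *m kvec k xbar x) 0 0
  - 2 * ((wvec mu D k xbar x)^T *m invmx (Kmat a) *m kvec k xbar x) 0 0
  + wfun mu D k x x.

Lemma Kmat_sym (a : 'I_n -> nat) :
  (forall i j, k (xbar i) (xbar j) = k (xbar j) (xbar i)) -> (Kmat a)^T = Kmat a.
Proof.
move=> ksym; apply/matrixP => i j; rewrite !mxE ksym.
by have [->//|ij] := eqVneq i j; rewrite !mul0r.
Qed.

Lemma Kmat_replicate (a : 'I_n -> nat) (l : 'I_n) : (0 < a l)%N ->
  Kmat (fun i => (a i + (i == l))%N) =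
  Kmat a - (r (xbar l) / ((a l)%:R * (a l + 1)%:R)) *: delta_mx l l.
Proof.
move=> al_gt0; apply/matrixP => i j; rewrite !mxE.
have [->|il] := eqVneq i l; last by rewrite /= addn0 mulr0 subr0.
have [<-|lj] := eqVneq l j; last by rewrite andbF !mul0r mulr0 subr0.
have al0 : (a l)%:R != 0 :> R by rewrite pnatr_eq0 -lt0n.
have al1 : 1 + (a l)%:R != 0 :> R by rewrite addrC natr1 pnatr_eq0.
by rewrite /= !mul1r addn1; field; rewrite al0 al1.
Qed.

Lemma I_repE (a : 'I_n -> nat) (l : 'I_n) :
  Kmat a \in unitmx -> (0 < a l)%N -> r (xbar l) != 0 -> Bdenom k r xbar a l != 0 ->
  I_rep mu D k r xbar a l =
  Efun mu D k - \tr (invmx (Kmat a) *m Wmat) - \tr (Bmat k r xbar a l *m Wmat).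
Proof.
move=> Ku al_gt0 rl0 Bd0.
have al0 : (a l)%:R * (a l + 1)%:R != 0 :> R.
  by rewrite mulf_neq0 // pnatr_eq0 ?addn1 // -lt0n.
have ell : ((delta_mx 0 l : 'rV_n) *m invmx (Kmat a) *m (delta_mx l 0 : 'cV_n)) 0 0 =
      invmx (Kmat a) l l.
  by rewrite -rowE -colE !mxE.
have d0 : r (xbar l) / ((a l)%:R * (a l + 1)%:R) != 0.
  by rewrite mulf_neq0 ?invr_eq0.
rewrite /I_rep Kmat_replicate // -(mul_delta_mx (0 : 'I_1)).
rewrite invmx_subr_rank1 // ell invf_div -/(Bdenom k r xbar a l) // -rowE -colE.
by rewrite mulmxDl mxtraceD opprD addrA.
Qed.

Lemma sigma2E (a : 'I_n -> nat) (x : T) :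
  sigma2 k r xbar a x =
  schur_border (Kmat a) (kvec k xbar x) (kvec k xbar x)^T (k x x + r x).
Proof. by rewrite /sigma2 /sigcheck2 /schur_border addrAC. Qed.

Lemma I_newE (a : 'I_n -> nat) (x : T) :
  Kmat a \in unitmx -> (Kmat a)^T = Kmat a -> sigma2 k r xbar a x != 0 ->
  I_new mu D k r xbar a x =
  Efun mu D k - \tr (invmx (Kmat a) *m Wmat) - rhs_bound_num a x / sigma2 k r xbar a x.
Proof.
move=> Ku KT s0; rewrite /I_new mxtrace_invmx_border_mul ?trmx_inv ?KT -?sigma2E //.
by rewrite opprD addrA.
Qed.

End ReplicateOrNewSite.

Theorem proposition1 (R : realType) (dsp : measure_display) (T : measurableType dsp)
  (mu : {measure set T -> \bar R}) (D : set T) (k : T -> T -> R) (r : T -> R)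
  (n : nat) (xbar : 'I_n -> T) (a : 'I_n -> nat) (kstar : 'I_n) :
  measurable D ->
  pd_kernel D k ->
  (forall y, D y -> measurable_fun D (fun x => k y x)) ->
  measurable_fun D (fun x => k x x) ->
  mu.-integrable D (fun x => (k x x)%:E) ->
  (forall y z, D y -> D z -> mu.-integrable D (fun x => (k y x * k z x)%:E)) ->
  (forall x, D x -> 0 <= r x) ->
  (forall i, D (xbar i)) ->
  injective xbar ->
  (forall i, (0 < a i)%N) ->
  (forall i, 0 < r (xbar i)) ->
  Kmat k r xbar a \in unitmx ->
  (forall x, D x -> 0 < sigma2 k r xbar a x) ->
  (forall l, I_rep mu D k r xbar a kstar <= I_rep mu D k r xbar a l) ->
  Bdenom k r xbar a kstar != 0 ->
  0 < \tr (Bmat k r xbar a kstar *m Wmat mu D k xbar) ->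
  (forall x, D x -> rhs_bound mu D k r xbar a kstar x <= r x) ->
  forall x, D x -> I_rep mu D k r xbar a kstar <= I_new mu D k r xbar a x.
Proof.
move=> _ [ksym _] _ _ _ _ _ xbarD _ a_gt0 r_gt0 Ku sigma2_gt0 _ Bd0 trBW_gt0.
move=> bound x Dx; have s_gt0 := sigma2_gt0 x Dx.
have KT : (Kmat k r xbar a)^T = Kmat k r xbar a.
  by apply: Kmat_sym => i j; apply: ksym; apply: xbarD.
rewrite (I_repE mu D Ku (a_gt0 _) (lt0r_neq0 (r_gt0 _)) Bd0).
rewrite (I_newE mu D Ku KT (lt0r_neq0 s_gt0)).
apply: lerB => //; rewrite ler_pdivrMr // mulrC -ler_pdivrMr //.
by rewrite /sigma2 addrC -lerBlDr; apply: bound.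
Qed.
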